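(* Let $n\in\mathbb{N}$, let $f:\mathbb{R}^n\to\mathbb{R}$ be a continuous convex function, let $\mathbf{X}=(X_1,\dots,X_n)$ with $X_i\in\mathcal{E}$, and let $\mathbb{F}$ be a conditional expectation on $\mathcal{E}$. Write $\mathbb{F}\mathbf{X}=(\mathbb{F}X_1,\dots,\mathbb{F}X_n)$. If $f(\mathbf{X})\in\mathcal{E}$, then $\mathbb{F}(f(\mathbf{X}))\ge f(\mathbb{F}\mathbf{X})$.
   Context: Let $\mathcal{E}$ be an order complete vector lattice with a weak order unit $E$, $K$ its Stone space (extremally disconnected compact Hausdorff), and $C^\infty(K)$ the vector lattice (and f-algebra) of continuous functions $K\to[-\infty,\infty]$ finite off a nowhere dense set (identified when equal off a nowhere dense set), which is the universal completion $\mathcal{E}^u$. Fix a Maeda–Ogasawara representation of $\mathcal{E}$ as an order dense ideal of $C^\infty(K)$ with $E$ corresponding to $\mathbf{1}$. For continuous $f:\mathbb{R}^n\to\mathbb{R}$ and $X_1,\dots,X_n\in C^\infty(K)$, $f(\mathbf{X})=f(X_1,\dots,X_n)$ denotes the unique element of $C^\infty(K)$ agreeing with $\omega\mapsto f(X_1(\omega),\dots,X_n(\omega))$ on the open dense set where all $X_i$ are finite. A conditional expectation on $\mathcal{E}$ is an order continuous, strictly positive linear projection $\mathbb{F}:\mathcal{E}\to\mathcal{E}$ whose range is an order complete vector sublattice of $\mathcal{E}$ and with $\mathbb{F}E=E$. *)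

From HB Require Import structures.
From mathcomp Require Import all_boot all_order all_algebra.
From mathcomp Require Import all_classical all_reals all_analysis.
From Stdlib Require Import ClassicalEpsilon.

Set Implicit Arguments.
Unset Strict Implicit.
Unset Printing Implicit Defensive.

Import Order.TTheory GRing.Theory Num.Theory.
Import numFieldNormedType.Exports.
Local Open Scope classical_set_scope.
Local Open Scope ring_scope.

Definition nowhere_dense (K : topologicalType) (A : set K) : Prop :=
  interior (closure A) = set0.

Definition extremally_disconnected (K : topologicalType) : Prop :=
  forall U : set K, open U -> open (closure U).

Definition stonean (K : topologicalType) : Prop :=
  [/\ compact [set: K], hausdorff_space K & extremally_disconnected K].

(* C^oo(K).  Its elements are continuous K -> [-oo,+oo] finite off a        *)
(* nowhere dense set.  Two continuous functions into the Hausdorff space     *)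
(* [-oo,+oo] that agree off a nowhere dense set agree on a dense set, hence  *)
(* everywhere; so the identification "equal off a nowhere dense set" is      *)
(* plain equality of functions and no quotient is needed.                    *)

Definition Cinf (R : realType) (K : topologicalType) (X : K -> \bar R) : Prop :=
  continuous X /\
  exists N : set K, nowhere_dense N /\ forall w, ~ N w -> X w \is a fin_num.

Definition fcalc (R : realType) (K : topologicalType) (n : nat)
  (f : 'rV[R]_n -> R) (X : 'I_n -> K -> \bar R) : K -> \bar R :=
  epsilon (inhabits (fun _ : K => 0%E))
    (fun Z : K -> \bar R => Cinf Z /\
       forall w, (forall i, X i w \is a fin_num) ->
         Z w = (f (\row_i fine (X i w)))%:E).

Definition cadd (R : realType) (K : topologicalType) (X Y : K -> \bar R)
  : K -> \bar R :=
  epsilon (inhabits (fun _ : K => 0%E))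
    (fun Z : K -> \bar R => Cinf Z /\
       forall w, X w \is a fin_num -> Y w \is a fin_num ->
         Z w = (X w + Y w)%E).

Definition cscale (R : realType) (K : topologicalType) (c : R) (X : K -> \bar R)
  : K -> \bar R := fun w => (c%:E * X w)%E.

Definition czero (R : realType) (K : topologicalType) : K -> \bar R :=
  fun _ => 0%E.

Definition cone (R : realType) (K : topologicalType) : K -> \bar R :=
  fun _ => 1%E.

Definition cmax (R : realType) (K : topologicalType) (X Y : K -> \bar R)
  : K -> \bar R := fun w => Order.max (X w) (Y w).

Definition cmin (R : realType) (K : topologicalType) (X Y : K -> \bar R)
  : K -> \bar R := fun w => Order.min (X w) (Y w).

Definition cabs (R : realType) (K : topologicalType) (X : K -> \bar R)
  : K -> \bar R := fun w => `|X w|%E.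

Definition cle (R : realType) (K : topologicalType) (X Y : K -> \bar R) : Prop :=
  forall w, (X w <= Y w)%E.

Definition is_sup_in (R : realType) (K : topologicalType)
  (S A : set (K -> \bar R)) (s : K -> \bar R) : Prop :=
  [/\ S s, (forall a, A a -> cle a s) &
      (forall u, S u -> (forall a, A a -> cle a u) -> cle s u)].

Definition is_inf_in (R : realType) (K : topologicalType)
  (S A : set (K -> \bar R)) (s : K -> \bar R) : Prop :=
  [/\ S s, (forall a, A a -> cle s a) &
      (forall u, S u -> (forall a, A a -> cle u a) -> cle u s)].

Definition order_complete_in (R : realType) (K : topologicalType)
  (S : set (K -> \bar R)) : Prop :=
  forall A, A `<=` S -> A !=set0 ->
    (exists u, S u /\ forall a, A a -> cle a u) ->
    exists s, is_sup_in S A s.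

Definition is_subspace (R : realType) (K : topologicalType)
  (E : set (K -> \bar R)) : Prop :=
  [/\ E `<=` @Cinf R K, E (@czero R K),
      (forall X Y, E X -> E Y -> E (cadd X Y)) &
      (forall c X, E X -> E (cscale c X))].

Definition is_sublattice (R : realType) (K : topologicalType)
  (E : set (K -> \bar R)) : Prop :=
  [/\ is_subspace E,
      (forall X Y, E X -> E Y -> E (cmax X Y)) &
      (forall X Y, E X -> E Y -> E (cmin X Y))].

Definition order_dense_ideal (R : realType) (K : topologicalType)
  (E : set (K -> \bar R)) : Prop :=
  [/\ is_subspace E,
      (forall X Y, E X -> Cinf Y -> cle (cabs Y) (cabs X) -> E Y) &
      (forall Y, Cinf Y -> cle (@czero R K) Y -> Y <> @czero R K ->
         exists X, [/\ E X, cle (@czero R K) X, X <> @czero R K & cle X Y])].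

Definition downward_directed (R : realType) (K : topologicalType)
  (D : set (K -> \bar R)) : Prop :=
  forall a b, D a -> D b -> exists c, [/\ D c, cle c a & cle c b].

Definition order_continuous_on (R : realType) (K : topologicalType)
  (E : set (K -> \bar R)) (F : (K -> \bar R) -> (K -> \bar R)) : Prop :=
  forall D, D `<=` E -> D !=set0 -> downward_directed D ->
    is_inf_in E D (@czero R K) -> is_inf_in E (F @` D) (@czero R K).

Definition cond_exp (R : realType) (K : topologicalType)
  (E : set (K -> \bar R)) (F : (K -> \bar R) -> (K -> \bar R)) : Prop :=
  (forall X, E X -> E (F X)) /\
  (forall X Y, E X -> E Y -> F (cadd X Y) = cadd (F X) (F Y)) /\
  (forall c X, E X -> F (cscale c X) = cscale c (F X)) /\
  order_continuous_on E F /\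
  (forall X, E X -> cle (@czero R K) X -> X <> @czero R K ->
     cle (@czero R K) (F X) /\ F X <> @czero R K) /\
  (forall X, E X -> F (F X) = F X) /\
  is_sublattice (F @` E) /\ order_complete_in (F @` E) /\
  (* F E = E, where E = 1 is the weak order unit *)
  F (@cone R K) = @cone R K.

From Pilot Require Import Defs.
From HB Require Import structures.
From mathcomp Require Import all_boot all_order all_algebra.
From mathcomp Require Import all_classical all_reals all_analysis.
From mathcomp Require Import ring lra.
From Stdlib Require Import ClassicalEpsilon.

Import Order.TTheory GRing.Theory Num.Theory.
Import numFieldNormedType.Exports.
Local Open Scope classical_set_scope.
Local Open Scope ring_scope.

(* A continuous convex f lies above an affine function x |-> b + a.x that is
   within e of f at any prescribed point y.  Then f(X) - (b + a.X) >= 0, and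
   F is positive, linear and fixes 1, so F(f(X)) >= b + a.FX, which at a point
   w where FX is finite is >= f(FX(w)) - e.  Both sides of the claim are
   continuous into [-oo, +oo], so it suffices to compare them on the dense set
   where everything is finite.  That f(X) is actually specified by [fcalc]
   rests on extremal disconnectedness: a continuous real function on an open
   dense set whose sublevel sets are open extends continuously to K. *)

Lemma continuous_sum (R : realType) (T : topologicalType) (I : Type)
    (s : seq I) (g : I -> T -> R) :
  (forall i, continuous (g i)) -> continuous (fun x => \sum_(i <- s) g i x).
Proof.
move=> cg; elim: s => [|i s IH].
  by under eq_fun do rewrite big_nil; exact: cst_continuous.
under eq_fun do rewrite big_cons.
by move=> x; exact: (continuousD (cg i x) (IH x)).
Qed.

Lemma ler_term_sum {R : numDomainType} {m : nat} (G : 'I_m -> R) (i : 'I_m) :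
  (forall j, 0 <= G j) -> G i <= \sum_j G j.
Proof. by move=> G0; rewrite (bigD1 i) //= lerDl sumr_ge0. Qed.

Lemma ge0_of_quadratic_ge0 (R : realFieldType) (A B : R) : 0 <= B ->
  (forall l, 0 < l -> l <= 1 -> 0 <= 2 * l * A + l ^+ 2 * B) -> 0 <= A.
Proof.
move=> B0 H; rewrite leNgt; apply/negP => A0.
have BA : 0 < B - A by lra.
pose l := - A / (B - A).
have l0 : 0 < l by apply: divr_gt0; lra.
have l1 : l <= 1 by rewrite /l ler_pdivrMr //; lra.
have lB : l * B <= - A by rewrite /l mulrAC ler_pdivrMr //; nra.
by have := H l l0 l1; nra.
Qed.

Section AffineMinorant.
Context {R : realType} {n : nat} {f : 'rV[R]_n -> R}.
Hypothesis fC : continuous f.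
Hypothesis fconv : convex_function (setT : set (convex_lmodType 'rV[R]_n)) f.
Context {y : 'rV[R]_n} {t0 : R}.
Hypothesis t0_lt : t0 < f y.

Local Notation V := 'rV[R]_n.

(* The squared distance from (y, t0) to the point (x, max (f x) t0) of the
   epigraph of f.  Its minimiser is the projection of (y, t0) onto the
   epigraph, and the projection direction is normal to a supporting
   hyperplane. *)
Definition epi_sqdist (x : V) :=
  \sum_i (x ord0 i - y ord0 i) ^+ 2 + Num.max (f x - t0) 0 ^+ 2.

Lemma continuous_epi_sqdist : continuous epi_sqdist.
Proof.
have sq_cont (g : V -> R) : continuous g -> continuous (fun x => g x ^+ 2).
  by move=> gc x; under eq_fun do rewrite expr2; exact: continuousM (gc x) (gc x).
have dist_cont : continuous (fun x : V => \sum_i (x ord0 i - y ord0 i) ^+ 2).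
  apply: continuous_sum => i; apply: sq_cont => z.
  exact: (continuousB (@coord_continuous R 1 n ord0 i z)
    (@cst_continuous _ R (y ord0 i) z)).
have height_cont : continuous (fun x => Num.max (f x - t0) 0 ^+ 2).
  apply: sq_cont => z.
  have shift_cont : {for z, continuous (fun x : V => f x - t0)}.
    exact: (continuousB (fC z) (@cst_continuous _ R t0 z)).
  exact: continuous_max shift_cont (@cst_continuous _ R 0 z).
by move=> x; exact: continuousD (dist_cont x) (height_cont x).
Qed.

Lemma epi_sqdist_y : epi_sqdist y = (f y - t0) ^+ 2.
Proof.
rewrite /epi_sqdist big1 ?add0r; last by move=> i _; rewrite subrr expr0n.
by rewrite max_l // subr_ge0 ltW.
Qed.

Lemma epi_sqdist_has_min : exists xs, forall x, epi_sqdist xs <= epi_sqdist x.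
Proof.
pose d := f y - t0.
have d0 : 0 < d by rewrite subr_gt0.
pose side i := `[y ord0 i - d, y ord0 i + d]%classic.
pose box := [set x : V | forall i, side i (x ord0 i)].
have box_compact : compact box.
  by apply: (rV_compact (A := side)) => i; exact: segment_compact.
have box_y : box y by move=> i; rewrite /side /= in_itv /=; apply/andP; split; lra.
have [xs xs_box xs_min] := EVT_min_rV (ex_intro _ y box_y) box_compact
  (continuous_subspaceT continuous_epi_sqdist).
exists xs => x; have [/mem_set/xs_min //|x_out] := pselect (box x).
have [i x_i] : exists i, ~ side i (x ord0 i).
  by apply/existsNP => x_in; apply: x_out => i; exact: x_in.
have far : d ^+ 2 < (x ord0 i - y ord0 i) ^+ 2.
  rewrite ltNge; apply/negP => near; apply: x_i.
  by rewrite /side /= in_itv /=; apply/andP; split; nra.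
have : (x ord0 i - y ord0 i) ^+ 2 <= epi_sqdist x.
  apply: le_trans (ler_term_sum (fun j => (x ord0 j - y ord0 j) ^+ 2) i
    (fun j => sqr_ge0 _)) _.
  by rewrite lerDl sqr_ge0.
by have := xs_min y (mem_set box_y); rewrite epi_sqdist_y -/d; lra.
Qed.

Section Projection.
Context {xs : V}.
Hypothesis xs_min : forall x, epi_sqdist xs <= epi_sqdist x.

Let u i := xs ord0 i - y ord0 i.
Let sig := Num.max (f xs - t0) 0.

(* First-order optimality of xs along the segment towards x; convexity keeps
   the points (l x + (1 - l) xs, l f x + (1 - l) (t0 + sig)) in the epigraph. *)
Lemma epi_sqdist_variation (x : V) :
  0 <= \sum_i u i * (x ord0 i - xs ord0 i) + sig * (f x - (t0 + sig)).
Proof.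
pose d i := x ord0 i - xs ord0 i.
pose del := f x - (t0 + sig).
change (0 <= \sum_i u i * d i + sig * del).
have fxs : f xs <= t0 + sig by rewrite -lerBlDl le_max lexx.
apply: (@ge0_of_quadratic_ge0 _ _ (\sum_i d i ^+ 2 + del ^+ 2)).
  by rewrite addr_ge0 ?sqr_ge0 // sumr_ge0 // => i _; rewrite sqr_ge0.
move=> l l0 l1.
pose xl : V := l *: x + (1 - l) *: xs.
pose sl := l * f x + (1 - l) * (t0 + sig).
have fxl : f xl <= sl.
  have conv_xl : f xl <= l * f x + (1 - l) * f xs.
    by have := fconv (Itv01 (ltW l0) l1) x xs (mem_set I) (mem_set I); rewrite /= convRE.
  by apply: le_trans conv_xl _; rewrite /sl lerD2l ler_wpM2l // subr_ge0.
have sig0 : 0 <= sig by rewrite le_max lexx orbT.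
have max_le : Num.max (f xl - t0) 0 ^+ 2 <= (sig + l * del) ^+ 2.
  have -> : sig + l * del = sl - t0 by rewrite /sl /del; ring.
  by case: (lerP (f xl - t0) 0) => h; [rewrite expr0n /= sqr_ge0 | nra].
have sum_xl : \sum_i (xl ord0 i - y ord0 i) ^+ 2 =
    \sum_i u i ^+ 2 + 2 * l * (\sum_i u i * d i) + l ^+ 2 * (\sum_i d i ^+ 2).
  rewrite !mulr_sumr -!big_split /=; apply: eq_bigr => i _.
  by rewrite /xl !mxE /u /d; ring.
have xs_val : epi_sqdist xs = \sum_i u i ^+ 2 + sig ^+ 2 by [].
have := xs_min xl; rewrite xs_val /epi_sqdist sum_xl.
set Su2 := \sum_i u i ^+ 2; set Sud := \sum_i u i * d i.
set Sd2 := \sum_i d i ^+ 2 => H.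
nra.
Qed.

Lemma sum_sqr_u_ge0 : 0 <= \sum_i u i ^+ 2.
Proof. by apply: sumr_ge0 => i _; exact: sqr_ge0. Qed.

Lemma sum_u_y : \sum_i u i * (y ord0 i - xs ord0 i) = - \sum_i u i ^+ 2.
Proof. by rewrite -sumrN; apply: eq_bigr => i _; rewrite /u; ring. Qed.

(* If sig were 0, testing the variational inequality at y would force xs = y,
   but then sig = f y - t0 > 0. *)
Lemma projection_height_gt0 : 0 < sig.
Proof.
rewrite lt_neqAle le_max lexx orbT andbT; apply/negP => /eqP sig_0.
have := epi_sqdist_variation y.
rewrite -sig_0 mul0r addr0 sum_u_y oppr_ge0 => Su_le0.
have u0 j : u j = 0.
  by have := ler_term_sum (fun k => u k ^+ 2) j (fun k => sqr_ge0 _); nra.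
have xs_y : xs = y.
  by apply/matrixP => i j; rewrite (ord1 i); apply/eqP; rewrite -subr_eq0 -/(u j) u0.
move: sig_0; rewrite /sig xs_y max_l; first by move=> /esym/eqP; rewrite subr_eq0 gt_eqF.
by rewrite subr_ge0 ltW.
Qed.

Lemma projection_minorant : exists (a : 'I_n -> R) (b : R),
  (forall x : V, b + \sum_i a i * x ord0 i <= f x) /\
  t0 <= b + \sum_i a i * y ord0 i.
Proof.
have sig0 := projection_height_gt0.
(* the hyperplane through (xs, t0 + sig) with normal (u, -sig) *)
pose a i := - u i / sig.
pose b := t0 + sig + (\sum_i u i * xs ord0 i) / sig.
have affineE (x : V) : b + \sum_i a i * x ord0 i =
    t0 + sig - (\sum_i u i * (x ord0 i - xs ord0 i)) / sig.
  have -> : \sum_i a i * x ord0 i = - (\sum_i u i * x ord0 i) / sig.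
    by rewrite mulNr mulr_suml -sumrN; apply: eq_bigr => i _; rewrite /a; ring.
  have -> : \sum_i u i * (x ord0 i - xs ord0 i) =
      \sum_i u i * x ord0 i - \sum_i u i * xs ord0 i.
    by rewrite -sumrB; apply: eq_bigr => i _; ring.
  by rewrite /b; field; rewrite gt_eqF.
exists a, b; split=> [x|]; rewrite affineE.
  have := epi_sqdist_variation x.
  set S := \sum_i u i * _ => H.
  have : 0 <= S / sig + (f x - (t0 + sig)).
    have -> : S / sig + (f x - (t0 + sig)) = (S + sig * (f x - (t0 + sig))) / sig.
      by field; rewrite gt_eqF.
    exact: divr_ge0 H (ltW sig0).
  lra.
rewrite sum_u_y mulNr opprK.
have : 0 <= (\sum_i u i ^+ 2) / sig by apply: divr_ge0 (ltW sig0); exact: sum_sqr_u_ge0.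
lra.
Qed.

End Projection.

Lemma affine_minorant_below : exists (a : 'I_n -> R) (b : R),
  (forall x : V, b + \sum_i a i * x ord0 i <= f x) /\
  t0 <= b + \sum_i a i * y ord0 i.
Proof. by have [xs /projection_minorant] := epi_sqdist_has_min. Qed.

End AffineMinorant.

Section ExtendedContinuity.
Context {R : realType} {K : topologicalType}.

Lemma lte_exists_fin (x z : \bar R) : (x < z)%E -> exists r : R, (x < r%:E < z)%E.
Proof.
case: x => [x||] //; case: z => [z||] //=.
- rewrite lte_fin => xz; exists ((x + z) / 2); rewrite !lte_fin.
  by apply/andP; split; lra.
- by move=> _; exists (x + 1); rewrite lte_fin ltrDl ltr01 ltry.
- by move=> _; exists (z - 1); rewrite ltNyr lte_fin /=; lra.
- by move=> _; exists 0; rewrite ltNyr ltry.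
Qed.

Lemma cle_dense {Z1 Z2 : K -> \bar R} {U : set K} :
  continuous Z1 -> continuous Z2 -> dense U ->
  (forall w, U w -> (Z1 w <= Z2 w)%E) -> cle Z1 Z2.
Proof.
move=> c1 c2 dU le12 w; rewrite leNgt; apply/negP => /lte_exists_fin[r].
move=> /andP[Z2r rZ1].
pose O := Z2 @^-1` [set t | (t < r%:E)%E] `&` Z1 @^-1` [set t | (r%:E < t)%E].
have oO : open O.
  apply: openI.
    by apply: open_comp => [x _|]; [exact: c2 | exact: open_ereal_lt_ereal].
  by apply: open_comp => [x _|]; [exact: c1 | exact: open_ereal_gt_ereal].
have [v [[/= vZ2 vZ1] Uv]] := dU O (ex_intro _ w (conj Z2r rZ1)) oO.
by have := le12 v Uv; rewrite leNgt (lt_trans vZ2 vZ1).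
Qed.

Lemma open_fin_num {Z : K -> \bar R} : continuous Z ->
  open [set w | Z w \is a fin_num].
Proof.
move=> cZ.
have -> : [set w | Z w \is a fin_num] =
    Z @^-1` [set t | (-oo < t)%E] `&` Z @^-1` [set t | (t < +oo)%E].
  apply/seteqP; split => w /=; first by rewrite fin_numE ltNye ltey => /andP.
  by case; rewrite fin_numE -ltNye -ltey => -> ->.
apply: openI.
  by apply: open_comp => [x _|]; [exact: cZ | exact: open_ereal_gt_ereal].
by apply: open_comp => [x _|]; [exact: cZ | exact: open_ereal_lt_ereal].
Qed.

Lemma Cinf_dense {Z : K -> \bar R} : Cinf Z -> dense [set w | Z w \is a fin_num].
Proof.
move=> [_ [N [N_nd fin_off_N]]] O [v Ov] oO; apply: contrapT => O_fin.
have : interior (closure N) v.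
  apply: filterS (open_nbhs_nbhs (conj oO Ov)) => x Ox; apply: subset_closure.
  by apply/not_notP => Nx; apply: O_fin; exists x; split => //; exact: fin_off_N.
by rewrite N_nd.
Qed.

Lemma fin_num_family_open_dense {m} {Z : 'I_m -> K -> \bar R} :
  (forall i, Cinf (Z i)) ->
  open [set w | forall i, Z i w \is a fin_num] /\
  dense [set w | forall i, Z i w \is a fin_num].
Proof.
move=> CZ.
suff fin_s (s : seq 'I_m) : open [set w | forall i, i \in s -> Z i w \is a fin_num] /\
    dense [set w | forall i, i \in s -> Z i w \is a fin_num].
  have -> : [set w | forall i, Z i w \is a fin_num] =
      [set w | forall i, i \in enum 'I_m -> Z i w \is a fin_num].
    by apply/seteqP; split => w /= h i; [move=> _; exact: h | apply: h; rewrite mem_enum].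
  exact: fin_s.
elim: s => [|i s [oS dS]].
  have -> : [set w | forall i, i \in [::] -> Z i w \is a fin_num] = setT.
    by apply/seteqP; split => w // _ i.
  by split; [exact: openT | move=> O [v Ov] _; exists v].
have -> : [set w | forall j, j \in i :: s -> Z j w \is a fin_num] =
    [set w | Z i w \is a fin_num] `&` [set w | forall j, j \in s -> Z j w \is a fin_num].
  apply/seteqP; split => w /=.
    by move=> h; split => [|j js]; apply: h; rewrite inE ?eqxx ?js ?orbT.
  by case=> h1 h2 j; rewrite inE => /orP[/eqP->//|]; exact: h2.
have oi : open [set w | Z i w \is a fin_num] by apply: open_fin_num; case: (CZ i).
by split; [exact: openI | apply: denseI => //; exact: Cinf_dense].
Qed.

Lemma Cinf_cscale (c : R) {Z : K -> \bar R} : Cinf Z -> Cinf (Defs.cscale c Z).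
Proof.
case=> cZ [N [N_nd fin_N]]; split; first by move=> w; exact: cvgeZl (cZ w).
by exists N; split => // w /fin_N Zw; exact: fin_numM.
Qed.

Lemma nowhere_dense_setC (U : set K) : open U -> dense U -> nowhere_dense (~` U).
Proof.
move=> oU dU; apply/seteqP; split => // x.
rewrite /interior nbhsE => -[B [oB Bx] BC].
have [u [Bu Uu]] := dU B (ex_intro _ x Bx) oB.
by have [v [nUv Uv]] := BC u Bu U (open_nbhs_nbhs (conj oU Uu)).
Qed.

Lemma open_fin_family_preimage {m} {Z : 'I_m -> K -> \bar R} {U : set K}
    {O : set 'rV[R]_m} :
  (forall i, continuous (Z i)) -> open U ->
  (forall w, U w -> forall i, Z i w \is a fin_num) -> open O ->
  open (U `&` [set w | O (\row_i fine (Z i w))]).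
Proof.
move=> cZ oU Ufin oO; rewrite openE => w [Uw Ow].
have /nbhs_ballP [e /= e0 He] : nbhs (\row_i fine (Z i w)) O.
  exact: open_nbhs_nbhs.
have near_i i : \forall v \near w,
    Z i v \is a fin_num /\ ball (fine (Z i w)) e (fine (Z i v)).
  have near_Z : nbhs (Z i w)
      [set t | t \is a fin_num /\ ball (fine (Z i w)) e (fine t)].
    rewrite -(fineK (Ufin w Uw i)).
    have near_z : nbhs (fine (Z i w))
        (fun r => r%:E \is a fin_num /\ ball (fine (Z i w)) e (fine r%:E)).
      by apply/nbhs_ballP; exists e.
    exact: near_z.
  exact: cZ i w _ near_Z.
have := @filter_forall K _ _ (nbhs w) (nbhs_filter w) near_i.
move=> /filterI /(_ (open_nbhs_nbhs (conj oU Uw))).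
apply: filterS => v [near_v Uv]; split => //; apply: He.
by split => // i0 j; rewrite !mxE; exact: (near_v j).2.
Qed.

End ExtendedContinuity.

Section StoneExtension.
Context {R : realType} {K : topologicalType} (U : set K) (h : K -> R).
Hypothesis ED : extremally_disconnected K.
Hypothesis open_lt : forall r, open (U `&` [set w | h w < r]).
Hypothesis open_gt : forall r, open (U `&` [set w | r < h w]).

(* Clopen, by extremal disconnectedness. *)
Definition sublevel_closure r := closure (U `&` [set w | h w < r]).

Definition stone_ext (w : K) : \bar R :=
  ereal_inf [set r%:E | r in [set r | sublevel_closure r w]].

Lemma open_sublevel_closure r : open (sublevel_closure r).
Proof. exact: ED. Qed.

Lemma closed_sublevel_closure r : closed (sublevel_closure r).
Proof. exact: closed_closure. Qed.

Lemma sublevel_closureS r r' : r <= r' ->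
  sublevel_closure r `<=` sublevel_closure r'.
Proof.
by move=> rr'; apply: closureS => w [Uw hw]; split => //; exact: lt_le_trans rr'.
Qed.

Lemma sublevel_closure_gt w r : U w -> r < h w -> ~ sublevel_closure r w.
Proof.
move=> Uw rh /(_ (U `&` [set w | r < h w])) [].
  by apply: open_nbhs_nbhs; split.
by move=> v [[_ h1] [_ h2]]; move: (lt_trans h2 h1); rewrite ltxx.
Qed.

Lemma stone_ext_le w r : sublevel_closure r w -> (stone_ext w <= r%:E)%E.
Proof. by move=> Ar; apply: ereal_inf_lbound; exists r. Qed.

Lemma stone_ext_ge w r : ~ sublevel_closure r w -> (r%:E <= stone_ext w)%E.
Proof.
move=> nA; apply: le_ereal_inf_tmp => _ [r' Ar' <-].
rewrite lee_fin leNgt; apply/negP => r'r; apply: nA.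
exact: sublevel_closureS (ltW r'r) _ Ar'.
Qed.

Lemma stone_ext_lt w r : (stone_ext w < r%:E)%E -> sublevel_closure r w.
Proof.
move=> /ereal_inf_lt [_ [r' Ar' <-]]; rewrite lte_fin => r'r.
exact: sublevel_closureS (ltW r'r) _ Ar'.
Qed.

Lemma stone_extE w : U w -> stone_ext w = (h w)%:E.
Proof.
move=> Uw; apply/eqP; rewrite eq_le; apply/andP; split.
  apply/lee_addgt0Pr => e e0; rewrite -EFinD; apply: stone_ext_le.
  by apply: subset_closure; split; rewrite //= ltrDl.
apply: le_ereal_inf_tmp => _ [r Ar <-]; rewrite lee_fin leNgt; apply/negP => rh.
exact: sublevel_closure_gt Uw rh Ar.
Qed.

Lemma continuous_stone_ext : continuous stone_ext.
Proof.
move=> w O /=.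
have nbQ (Q : set K) : open Q -> Q w -> (forall v, Q v -> O (stone_ext v)) ->
    nbhs w (stone_ext @^-1` O).
  by move=> oQ Qw QO; apply: filterS (open_nbhs_nbhs (conj oQ Qw)) => v; exact: QO.
case Zw : (stone_ext w) => [z||] HO.
- move: (HO : nbhs z (fun r => O r%:E)) => /nbhs_ballP [e /= e0 He].
  apply: (nbQ (sublevel_closure (z + e / 2) `&` ~` sublevel_closure (z - e / 2))).
  + exact: openI (open_sublevel_closure _) (closed_openC (closed_sublevel_closure _)).
  + split; first by apply: stone_ext_lt; rewrite Zw lte_fin; lra.
    by move=> /stone_ext_le; rewrite Zw lee_fin; lra.
  + move=> v [/stone_ext_le h1 /stone_ext_ge h2]; move: h1 h2.
    case: (stone_ext v) => [t||] //=; rewrite !lee_fin => b1 b2.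
    by apply: He; rewrite /ball /= ltr_norml; apply/andP; split; lra.
- move: HO => [M [_ HM]].
  apply: (nbQ (~` sublevel_closure (M + 1))).
  + exact: closed_openC (closed_sublevel_closure _).
  + by move=> /stone_ext_le; rewrite Zw.
  + move=> v /stone_ext_ge h1; apply: HM; apply: lt_le_trans h1.
    by rewrite lte_fin; lra.
- move: HO => [M [_ HM]].
  apply: (nbQ (sublevel_closure (M - 1))).
  + exact: open_sublevel_closure.
  + by apply: stone_ext_lt; rewrite Zw ltNyr.
  + move=> v /stone_ext_le h1; apply: HM; apply: le_lt_trans h1 _.
    by rewrite lte_fin; lra.
Qed.

End StoneExtension.

Section FunctionalCalculus.
Context {R : realType} {K : topologicalType}.
Hypothesis ED : extremally_disconnected K.

Lemma fcalc_exists {m} {f : 'rV[R]_m -> R} {Z : 'I_m -> K -> \bar R} :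
  continuous f -> (forall i, Cinf (Z i)) ->
  exists Y : K -> \bar R, Cinf Y /\ forall w, (forall i, Z i w \is a fin_num) ->
    Y w = (f (\row_i fine (Z i w)))%:E.
Proof.
move=> fc CZ.
pose U := [set w | forall i, Z i w \is a fin_num].
have [oU dU] := fin_num_family_open_dense CZ.
have cZ i : continuous (Z i) by case: (CZ i).
have open_level (O : set R) : open O ->
    open (U `&` [set w | O (f (\row_i fine (Z i w)))]).
  move=> oO; apply: (open_fin_family_preimage (O := f @^-1` O)) => //.
  exact: open_comp (fun x _ => fc x) oO.
pose g w := f (\row_i fine (Z i w)).
have glt r : open (U `&` [set w | g w < r]).
  exact: open_level [set t | t < r] (open_lt (y := r)).
have ggt r : open (U `&` [set w | r < g w]).
  exact: open_level [set t | r < t] (open_gt (y := r)).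
exists (stone_ext U g); split; last exact: stone_extE U g ggt.
split; first exact: continuous_stone_ext.
exists (~` U); split; first exact: nowhere_dense_setC.
by move=> w /contrapT Uw; rewrite (stone_extE U g ggt).
Qed.

Lemma fcalc_spec {m} {f : 'rV[R]_m -> R} {Z : 'I_m -> K -> \bar R} :
  continuous f -> (forall i, Cinf (Z i)) ->
  Cinf (fcalc f Z) /\ forall w, (forall i, Z i w \is a fin_num) ->
    fcalc f Z w = (f (\row_i fine (Z i w)))%:E.
Proof. by move=> fc CZ; exact: epsilon_spec (fcalc_exists fc CZ). Qed.

(* Addition is the functional calculus of (s, t) |-> s + t. *)
Lemma cadd_spec {X Y : K -> \bar R} : Cinf X -> Cinf Y ->
  Cinf (Defs.cadd X Y) /\ forall w, X w \is a fin_num -> Y w \is a fin_num ->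
    Defs.cadd X Y w = (X w + Y w)%E.
Proof.
move=> CX CY.
suff add_exists : exists W : K -> \bar R, Cinf W /\
    forall w, X w \is a fin_num -> Y w \is a fin_num -> W w = (X w + Y w)%E.
  exact: epsilon_spec _ _ add_exists.
pose Z (i : 'I_2) := if i == ord0 then X else Y.
pose add2 (v : 'rV[R]_2) := v ord0 ord0 + v ord0 ord_max.
have add2_cont : continuous add2.
  move=> v; exact: (continuousD (@coord_continuous R 1 2 ord0 ord0 v)
     (@coord_continuous R 1 2 ord0 ord_max v)).
have CZ i : Cinf (Z i) by rewrite /Z; case: (i == ord0).
have [W [CW WE]] := fcalc_exists add2_cont CZ.
exists W; split => // w Xw Yw.
rewrite WE; last by move=> i; rewrite /Z; case: (i == ord0).
by rewrite /add2 !mxE /Z /= EFinD !fineK.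
Qed.

Lemma cle_subr_ge0 {A B : K -> \bar R} : Cinf A -> Cinf B ->
  cle A B <-> cle (@Defs.czero R K) (Defs.cadd B (Defs.cscale (-1) A)).
Proof.
move=> CA CB.
have [CD DE] := cadd_spec CB (Cinf_cscale (-1) CA).
have [cA _] := CA; have [cB _] := CB.
have dAB : dense ([set w | A w \is a fin_num] `&` [set w | B w \is a fin_num]).
  by apply: denseI; [exact: open_fin_num | exact: Cinf_dense | exact: Cinf_dense].
have c0 : continuous (@Defs.czero R K) := @cst_continuous K (\bar R) 0%E.
have DwE w : A w \is a fin_num -> B w \is a fin_num ->
    Defs.cadd B (Defs.cscale (-1) A) w = (fine (B w) - fine (A w))%:E.
  move=> Aw Bw; rewrite DE //; last exact: fin_numM.
  by rewrite /Defs.cscale -{1}(fineK Aw) -{1}(fineK Bw) -!EFinM -EFinD mulN1r.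
split=> [le_AB | D0].
  apply: cle_dense c0 CD.1 dAB _ => w [/= Aw Bw].
  by rewrite DwE // lee_fin subr_ge0 -lee_fin !fineK.
apply: cle_dense cA cB dAB _ => w [/= Aw Bw].
by have := D0 w; rewrite DwE // lee_fin subr_ge0 -lee_fin !fineK.
Qed.

End FunctionalCalculus.

Section ConditionalExpectation.
Context {R : realType} {K : topologicalType} {E : set (K -> \bar R)}.
Context {F : (K -> \bar R) -> (K -> \bar R)}.
Hypothesis ED : extremally_disconnected K.
Hypothesis HE : is_subspace E.
Hypothesis HE1 : E (@cone R K).
Hypothesis HF : cond_exp E F.

Lemma cond_exp0 : F (@Defs.czero R K) = @Defs.czero R K.
Proof.
have [_ E0 _ _] := HE; have [_ [_ [Fscale _]]] := HF.
have zero_scale : Defs.cscale 0 (@Defs.czero R K) = @Defs.czero R K.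
  by apply/funext => v; rewrite /Defs.cscale mul0e.
by rewrite -{1}zero_scale Fscale //; apply/funext => v; rewrite /Defs.cscale mul0e.
Qed.

Lemma cond_exp_ge0 {X} : E X -> cle (@Defs.czero R K) X -> cle (@Defs.czero R K) (F X).
Proof.
move=> EX X0; have [_ [_ [_ [_ [Fpos _]]]]] := HF.
have [->|Xn0] := pselect (X = @Defs.czero R K); last exact: (Fpos _ EX X0 Xn0).1.
by rewrite cond_exp0 => w; rewrite lexx.
Qed.

Lemma cond_exp_le {A B} : E A -> E B -> cle A B -> cle (F A) (F B).
Proof.
have [Esub _ Eadd Escale] := HE; have [FE [Fadd [Fscale _]]] := HF.
move=> EA EB /(cle_subr_ge0 ED (Esub _ EA) (Esub _ EB)) D0.
apply/(cle_subr_ge0 ED (Esub _ (FE _ EA)) (Esub _ (FE _ EB))).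
have EmA : E (Defs.cscale (-1) A) := Escale _ _ EA.
by rewrite -Fscale // -Fadd //; exact: cond_exp_ge0 (Eadd _ _ EB EmA) D0.
Qed.

Context {n : nat}.

Definition lincomb (a : 'I_n -> R) (b : R) (Z : 'I_n -> K -> \bar R) (s : seq 'I_n)
    : K -> \bar R :=
  foldr (fun i acc => Defs.cadd (Defs.cscale (a i) (Z i)) acc)
    (Defs.cscale b (@cone R K)) s.

Lemma lincomb_in a b Z s : (forall i, E (Z i)) -> E (lincomb a b Z s).
Proof.
have [_ _ Eadd Escale] := HE.
by move=> EZ; elim: s => [|i s IH] /=; [exact: Escale | apply: Eadd; [exact: Escale|]].
Qed.

Lemma cond_exp_lincomb a b Z s : (forall i, E (Z i)) ->
  F (lincomb a b Z s) = lincomb a b (fun i => F (Z i)) s.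
Proof.
have [_ _ _ Escale] := HE; have [_ [Fadd [Fscale [_ [_ [_ [_ [_ F1]]]]]]]] := HF.
move=> EZ; elim: s => [|i s IH] /=; first by rewrite Fscale // F1.
by rewrite Fadd ?Fscale ?IH //; [exact: Escale | exact: lincomb_in].
Qed.

Lemma lincombE a b Z s w : (forall i, E (Z i)) -> (forall i, Z i w \is a fin_num) ->
  lincomb a b Z s w = (b + \sum_(i <- s) a i * fine (Z i w))%:E.
Proof.
have [Esub _ _ Escale] := HE.
move=> EZ Zw; elim: s => [|i s IH] /=.
  by rewrite big_nil addr0 /Defs.cscale /cone mule1.
have CA : Cinf (Defs.cscale (a i) (Z i)) by apply: Esub; exact: Escale.
have CB : Cinf (lincomb a b Z s) by apply: Esub; exact: lincomb_in.
have aZw : Defs.cscale (a i) (Z i) w = (a i * fine (Z i w))%:E.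
  by rewrite /Defs.cscale -{1}(fineK (Zw i)) -EFinM.
rewrite (cadd_spec ED CA CB).2 ?aZw ?IH // -EFinD big_cons.
by congr (_%:E); ring.
Qed.

Lemma lincomb_le_fcalc {f : 'rV[R]_n -> R} (a : 'I_n -> R) (b : R)
    {X : 'I_n -> K -> \bar R} : continuous f ->
  (forall i, E (X i)) -> (forall x : 'rV[R]_n, b + \sum_i a i * x ord0 i <= f x) ->
  cle (lincomb a b X (index_enum 'I_n)) (fcalc f X).
Proof.
have [Esub _ _ _] := HE.
move=> fc EX minor; have CX i := Esub _ (EX i).
have [Cf fE] := fcalc_spec ED fc CX.
have [_ dX] := fin_num_family_open_dense CX.
apply: cle_dense (Esub _ (lincomb_in a b X _ EX)).1 Cf.1 dX _ => w Xw.
rewrite lincombE // fE // lee_fin.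
by have := minor (\row_i fine (X i w)); under eq_bigr do rewrite mxE.
Qed.

End ConditionalExpectation.

Theorem mainTheorem9 (R : realType) (K : topologicalType)
  (E : set (K -> \bar R))
  (HK : stonean K)
  (HE : order_dense_ideal E)
  (HEc : order_complete_in E)
  (HE1 : E (@cone R K))
  (n : nat) (f : 'rV[R]_n -> R)
  (Hfc : continuous f)
  (Hfconv : convex_function (setT : set (convex_lmodType 'rV[R]_n)) f)
  (X : 'I_n -> K -> \bar R) (HX : forall i, E (X i))
  (F : (K -> \bar R) -> (K -> \bar R)) (HF : cond_exp E F)
  (HfX : E (fcalc f X)) :
  cle (fcalc f (fun i => F (X i))) (F (fcalc f X)).
Proof.
have [HEs _ _] := HE; have [Esub _ _ _] := HEs; have [_ _ ED] := HK.
have [FE _] := HF.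
have EFX i : E (F (X i)) := FE _ (HX i).
have CFX i : Cinf (F (X i)) := Esub _ (EFX i).
have CFf : Cinf (F (fcalc f X)) := Esub _ (FE _ HfX).
have [Cg gE] := fcalc_spec ED Hfc CFX.
have [oFX dFX] := fin_num_family_open_dense CFX.
have dense_fin := denseI oFX dFX (Cinf_dense CFf).
apply: cle_dense Cg.1 CFf.1 dense_fin _.
move=> w [/= FXw Ffw]; rewrite gE // -(fineK Ffw) lee_fin.
set yv := \row_i fine (F (X i) w).
apply/ler_addgt0Pr => e e0.
have below : f yv - e < f yv by lra.
have [a [b [minor near]]] := affine_minorant_below Hfc Hfconv below.
have G_le := lincomb_le_fcalc ED HEs HE1 a b Hfc HX minor.
have := cond_exp_le ED HEs HF (lincomb_in HEs HE1 a b X _ HX) HfX G_le w.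
rewrite (cond_exp_lincomb HEs HE1 HF) // (lincombE ED HEs HE1) //.
rewrite -(fineK Ffw) lee_fin.
have yvE : \sum_i a i * yv ord0 i = \sum_i a i * fine (F (X i) w).
  by apply: eq_bigr => i _; rewrite mxE.
by rewrite yvE in near; lra.
Qed.
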